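(* Let $U$ be a finite universe, let $\mathbf{B} = (\mathbf{B}_1, \mathbf{B}_2)$ be any Bloom filter, and fix $p \in (\tfrac12, 1)$. The Warner filter built from $\mathbf{B}$ — whose construction algorithm $\mathbf{B}_1'$, on input $S \subseteq U$, initializes $S' \gets \emptyset$, adds each $x \in S$ to $S'$ independently with probability $p$, adds each $x \in U \setminus S$ to $S'$ independently with probability $1-p$, and returns $\mathbf{B}_1(S')$ (the query algorithm $\mathbf{B}_2$ being unchanged) — satisfies $\left(\ln\frac{p}{1-p},\ 0\right)$-differential privacy, i.e. the randomized algorithm $\mathbf{B}_1'$ mapping sets to representations satisfies this differential privacy guarantee.
   Context: A Bloom filter is a pair $\mathbf{B}=(\mathbf{B}_1,\mathbf{B}_2)$ of probabilistic polynomial-time algorithms: $\mathbf{B}_1$ takes a set $S \subseteq U$ and returns a representation $M$; $\mathbf{B}_2$ takes a representation $M$ and an element $x \in U$ and outputs a bit. For sets $A,B$, let $d_{sj}(A,B) = |A \cup B| - |A \cap B|$. A randomized algorithm $\mathbf{A}_r$ taking subsets of $U$ as input satisfies $(\epsilon,\delta)$-differential privacy if for any two sets $S,S'$ with $d_{sj}(S,S') \le 1$ and any output range $O \subseteq \mathrm{Range}(\mathbf{A}_r)$, $\Pr[\mathbf{A}_r(S) \in O] \le e^{\epsilon}\Pr[\mathbf{A}_r(S') \in O] + \delta$, probabilities over the randomness of $\mathbf{A}_r$. *)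

From HB Require Import structures.
From mathcomp Require Import all_boot all_order all_algebra.
From mathcomp Require Import all_classical all_reals all_analysis.
Set Implicit Arguments. Unset Strict Implicit. Unset Printing Implicit Defensive.
Import Order.TTheory GRing.Theory Num.Theory.
Local Open Scope classical_set_scope.
Local Open Scope ring_scope.

Definition d_sj (U : finType) (A B : {set U}) : nat := (#|A :|: B| - #|A :&: B|)%N.

(* A randomized algorithm on subsets of U with outputs in a measurable space T
   is given by its output distribution: A S O = Pr[A(S) \in O]. *)
Definition differentially_private (U : finType) (d : measure_display)
  (T : measurableType d) (R : realType)
  (A : {set U} -> set T -> \bar R) (eps delta : R) : Prop :=
  forall S S' : {set U}, (d_sj S S' <= 1)%N ->
  forall O : set T, measurable O ->
    (A S O <= (expR eps)%:E * A S' O + delta%:E)%E.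

(* Probability that the Warner construction turns S into S':
   each x in S is kept with prob. p, each x not in S is added with prob. 1-p,
   independently. *)
Definition warner_weight (U : finType) (R : realType) (p : R) (S S' : {set U}) : R :=
  \prod_(x : U) (if x \in S' then (if x \in S then p else 1 - p)
                 else (if x \in S then 1 - p else p)).

(* Output distribution of B1' (S) = B1 (S'), S' drawn as above:
   Pr[B1'(S) \in O] = sum_{S'} Pr[S'] * Pr[B1(S') \in O]. *)
Definition warner_B1 (U : finType) (d : measure_display) (T : measurableType d)
  (R : realType) (B1 : {set U} -> probability T R) (p : R)
  (S : {set U}) (O : set T) : \bar R :=
  (\sum_(S' : {set U}) (warner_weight p S S')%:E * B1 S' O)%E.

(* Pr[B1'(S) \in O] is a mixture of the Pr[B1(X) \in O] with the weights
   Pr[S |-> X], a product of one factor per element of U.  If S and S' differ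
   in at most one element, the weights Pr[S |-> X] and Pr[S' |-> X] differ in
   at most one factor, and there the ratio is p/(1-p) or (1-p)/p, both at most
   p/(1-p) since p > 1/2.  Hence every weight, and so the whole mixture, grows
   by at most the factor p/(1-p) = exp(ln(p/(1-p))) from S' to S. *)

From HB Require Import structures.
From mathcomp Require Import all_boot all_order all_algebra.
From mathcomp Require Import all_classical all_reals all_analysis.
From mathcomp Require Import lra.
Set Implicit Arguments. Unset Strict Implicit. Unset Printing Implicit Defensive.
Import Order.TTheory GRing.Theory Num.Theory.
Local Open Scope ring_scope.

Lemma d_sjE (U : finType) (A B : {set U}) :
  d_sj A B = #|[set x | (x \in A) != (x \in B)]|.
Proof.
have -> : [set x | (x \in A) != (x \in B)] = (A :|: B) :\: (A :&: B).
  by apply/setP => x; rewrite !inE; case: (x \in A); case: (x \in B).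
rewrite cardsD /d_sj; suff -> : (A :|: B) :&: (A :&: B) = A :&: B by [].
by apply/setP => x; rewrite !inE; case: (x \in A); case: (x \in B).
Qed.

Lemma ler_prod_scaled (R : realDomainType) (I : finType) (D : {set I}) (c : R)
    (f g : I -> R) :
  (forall i, 0 <= f i) -> (forall i, i \in D -> f i <= c * g i) ->
  {in ~: D, f =1 g} -> \prod_i f i <= c ^+ #|D| * \prod_i g i.
Proof.
move=> f_ge0 f_le f_eq.
rewrite (bigID (mem D)) [X in _ <= _ * X](bigID (mem D)) /= mulrA.
have -> : \prod_(i | i \notin D) g i = \prod_(i | i \notin D) f i.
  by apply: eq_bigr => i iD; rewrite f_eq // inE.
rewrite ler_wpM2r ?prodr_ge0 // -prodr_const -big_split /=.
by apply: ler_prod => i iD; rewrite f_ge0 f_le.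
Qed.

Lemma warner_ratio_ge1 (R : realFieldType) (p : R) :
  1 - p <= p -> p < 1 -> 1 <= p / (1 - p).
Proof. by move=> q_le_p p_lt1; rewrite ler_pdivlMr ?mul1r // subr_gt0. Qed.

Definition warner_factor (U : finType) (R : realType) (p : R) (S X : {set U})
    (x : U) : R :=
  if x \in X then (if x \in S then p else 1 - p)
  else (if x \in S then 1 - p else p).

Lemma warner_weightE (U : finType) (R : realType) (p : R) (S X : {set U}) :
  warner_weight p S X = \prod_x warner_factor p S X x.
Proof. by []. Qed.

Section WarnerWeight.
Variables (U : finType) (R : realType) (p : R).

Lemma warner_factor_ge0 (S X : {set U}) (x : U) :
  0 <= p <= 1 -> 0 <= warner_factor p S X x.
Proof. by rewrite /warner_factor; case: ifP; case: ifP => _ _; lra. Qed.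

Lemma warner_weight_ge0 (S X : {set U}) :
  0 <= p <= 1 -> 0 <= warner_weight p S X.
Proof. by move=> p01; apply: prodr_ge0 => x _; apply: warner_factor_ge0. Qed.

Lemma warner_factor_le (S S' X : {set U}) (x : U) : 1 - p <= p -> p < 1 ->
  warner_factor p S X x <= p / (1 - p) * warner_factor p S' X x.
Proof.
move=> q_le_p p_lt1.
have ratio_q : p / (1 - p) * (1 - p) = p by rewrite divfK // subr_eq0 gt_eqF.
have ratio_p : p <= p / (1 - p) * p.
  by rewrite ler_peMl ?warner_ratio_ge1 //; lra.
by rewrite /warner_factor; case: ifP; case: (x \in S); case: (x \in S') => _;
  lra.
Qed.

Lemma warner_weight_le (S S' X : {set U}) : 1 - p <= p -> p < 1 ->
  (d_sj S S' <= 1)%N ->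
  warner_weight p S X <= p / (1 - p) * warner_weight p S' X.
Proof.
move=> q_le_p p_lt1; rewrite d_sjE; set D := [set x | _] => D_le1.
have p01 : 0 <= p <= 1 by lra.
rewrite !warner_weightE.
apply: le_trans (ler_prod_scaled (D := D) (g := warner_factor p S' X) _ _ _) _.
- by move=> x; apply: warner_factor_ge0.
- by move=> x _; apply: warner_factor_le.
- by move=> x; rewrite !inE negbK /warner_factor => /eqP ->.
apply: ler_wpM2r; first by apply: prodr_ge0 => x _; apply: warner_factor_ge0.
by rewrite -[leRHS]expr1 ler_weXn2l ?warner_ratio_ge1.
Qed.

End WarnerWeight.

Theorem mainTheorem3 (U : finType) (d : measure_display) (T : measurableType d)
  (R : realType) (B1 : {set U} -> probability T R) (B2 : T -> U -> bool)
  (p : R) (hp1 : 1 / 2 < p) (hp2 : p < 1) :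
  differentially_private (warner_B1 B1 p) (ln (p / (1 - p))) 0.
Proof.
have q_le_p : 1 - p <= p by move: hp1; rewrite ltr_pdivrMr //; lra.
move=> S S' hS O _.
rewrite lnK; last by rewrite posrE (lt_le_trans ltr01) ?warner_ratio_ge1.
rewrite adde0 /warner_B1 ge0_sume_distrr; last first.
  by move=> X _; rewrite mule_ge0 // lee_fin warner_weight_ge0 //; lra.
apply: lee_sum => X _.
by rewrite muleA -EFinM lee_wpmul2r // lee_fin warner_weight_le.
Qed.
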